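(* Let $\varphi$ be an Orlicz $N$-function with Young–Fenchel transform $\psi$. Let $\{X_{k,n},k\ge1,n\ge1\}$ be a double array of $\varphi$-subgaussian random variables, let $g$ be a positive non-decreasing function, set $a_{m,j}=g(\ln(mj))\psi^{-1}(\ln(mj))$, $Y_{m,j}=\max_{1\le k\le m,1\le n\le j}X_{k,n}-a_{m,j}$ and $Y^+_{m,j}=\max(Y_{m,j},0)$. Suppose there is a positive-valued function $f$ such that for all $m,j\ge1$, $1\le k\le m$, $1\le n\le j$, $$\frac{g(\ln(mj))}{\tau_\varphi(X_{k,n})}\ge f\left(\frac{mj}{kn}\right)\ge1,$$ and $f(x)\ge c_0>0$ for all $x\ge1$. Then for every $\alpha>2-c_0$, $$\sum_{m=1}^\infty\sum_{j=1}^\infty(mj)^{-\alpha}P(Y^+_{m,j}>0)<+\infty.$$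
   Context: An Orlicz $N$-function is a continuous even convex function $\varphi:\mathbb R\to\mathbb R$ with $\varphi(0)=0$, increasing on $(0,\infty)$, with $\varphi(x)/x\to0$ as $x\to0$ and $\varphi(x)/x\to+\infty$ as $x\to+\infty$. The Young–Fenchel transform is $\psi(x)=\sup_{y\in\mathbb R}(xy-\varphi(y))$; $\psi^{-1}$ is the inverse of $\psi$ on $[0,\infty)$. A random variable $X$ is $\varphi$-subgaussian if $EX=0$ and there is a finite $a>0$ with $E\exp(tX)\le\exp(\varphi(at))$ for all $t$; $\tau_\varphi(X)=\inf\{a>0:E\exp(tX)\le\exp(\varphi(at))\ \forall t\}$. *)

From HB Require Import structures.
From mathcomp Require Import all_boot all_order all_algebra.
From mathcomp Require Import all_classical all_reals all_analysis.
Unset Printing Implicit Defensive.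
Import Order.TTheory GRing.Theory Num.Theory.
Import numFieldNormedType.Exports.
Local Open Scope classical_set_scope.
Local Open Scope ring_scope.

Definition N_function {R : realType} (phi : R -> R) : Prop :=
  continuous phi /\
  (forall x, phi (- x) = phi x) /\
  (forall x y l, 0 <= l -> l <= 1 ->
     phi (l * x + (1 - l) * y) <= l * phi x + (1 - l) * phi y) /\
  phi 0 = 0 /\
  (forall x y, 0 < x -> x < y -> phi x < phi y) /\
  ((fun x => phi x / x) x @[x --> 0^'] --> 0) /\
  ((fun x => phi x / x) x @[x --> +oo] --> +oo).

Definition young_fenchel {R : realType} (phi : R -> R) (x : R) : R :=
  sup [set x * y - phi y | y in [set: R]].

Definition phi_subgaussian {R : realType} {d : measure_display}
  {T : measurableType d} (P : probability T R) (phi : R -> R)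
  (X : {RV P >-> R}) : Prop :=
  ('E_P[X] = 0)%E /\
  exists a : R, 0 < a /\
    forall t : R, (\int[P]_x (expR (t * X x))%:E <= (expR (phi (a * t)))%:E)%E.

Definition tau_phi {R : realType} {d : measure_display}
  {T : measurableType d} (P : probability T R) (phi : R -> R)
  (X : {RV P >-> R}) : R :=
  inf [set a : R | 0 < a /\
    forall t : R, (\int[P]_x (expR (t * X x))%:E <= (expR (phi (a * t)))%:E)%E].

Definition max_array {R : realType} {T : Type} (X : nat -> nat -> T -> R)
  (m j : nat) (x : T) : R :=
  \big[Num.max/X 1%N 1%N x]_(k < m) \big[Num.max/X 1%N 1%N x]_(n < j)
      X k.+1 n.+1 x.

(* For a phi-subgaussian X, the Chernoff bound with a scale close to tau_phi(X)
   and a point close to the supremum defining psi(v) gives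
   P(X >= G v) <= e * exp(-F psi(v)) whenever 1 <= F <= G / tau_phi(X).
   With v = psi^-1(ln mj), G = g(ln mj) and F = f(mj/kn) >= c0 every entry of
   the (m, j) array exceeds a_{m,j} with probability at most e (mj)^-c0, so a
   union bound over its mj entries gives P(Y+_{m,j} > 0) <= e (mj)^(1 - c0).
   The (m, j) summand is then at most e m^-s j^-s with s = alpha + c0 - 1 > 1,
   and the double series is dominated by the square of a convergent p-series. *)

From HB Require Import structures.
From mathcomp Require Import all_boot all_order all_algebra.
From mathcomp Require Import all_classical all_reals all_analysis.
From mathcomp Require Import ring lra.
Import Order.TTheory GRing.Theory Num.Theory.
Import numFieldNormedType.Exports.
Local Open Scope classical_set_scope.
Local Open Scope ring_scope.

Section powR_series.
Context {R : realType}.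

Lemma powRN_le_telescope (s x : R) : 1 <= s -> 0 < x ->
  (s - 1) * (x + 1) `^ (- s) <= x `^ (1 - s) - (x + 1) `^ (1 - s).
Proof.
move=> s1 x0; have x10 : 0 < x + 1 by lra.
rewrite /powR !gt_eqF //.
set a := ln x; set b := ln (x + 1).
have gap : expR (- b) <= b - a.
  have := expR_ge1Dx (a - b).
  have -> : expR (a - b) = 1 - expR (- b).
    by rewrite expRD !expRN /a /b !lnK ?posrE//; field; rewrite gt_eqF.
  lra.
have split_a : expR ((1 - s) * a) = expR ((1 - s) * b) * expR ((s - 1) * (b - a)).
  by rewrite -expRD; congr expR; ring.
have -> : expR (- s * b) = expR ((1 - s) * b) * expR (- b).
  by rewrite -expRD; congr expR; ring.
rewrite split_a; set w := expR ((1 - s) * b).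
have w_gt0 : 0 < w by exact: expR_gt0.
have exp_ge := expR_ge1Dx ((s - 1) * (b - a)).
have gap_s : (s - 1) * expR (- b) <= (s - 1) * (b - a).
  by rewrite ler_wpM2l // subr_ge0.
nra.
Qed.

Lemma powRN_partial_sum_le (s : R) (n : nat) : 1 < s ->
  \sum_(1 <= k < n) k%:R `^ (- s) <= s / (s - 1).
Proof.
move=> s1; have s10 : 0 < s - 1 by lra.
have tail_le (m : nat) : (s - 1) * \sum_(1 <= k < m.+1) k.+1%:R `^ (- s) <= 1.
  rewrite mulr_sumr.
  apply: (@le_trans _ _ (\sum_(1 <= k < m.+1)
    ((- k.+1%:R `^ (1 - s)) - (- k%:R `^ (1 - s))))).
    apply: ler_sum_nat => k /andP[k1 _]; rewrite opprK (addrC (- _)) -natr1.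
    by apply: powRN_le_telescope; rewrite ?ltr0n//; lra.
  rewrite telescope_sumr // powR1; have := powR_ge0 m.+1%:R (1 - s); lra.
case: n => [|[|n]]; try by rewrite big_geq // divr_ge0 //; lra.
rewrite big_ltn // powR1 big_add1 /=.
have := tail_le n; rewrite -ler_pdivlMl // mulr1.
have -> : s / (s - 1) = 1 + (s - 1)^-1 by field; rewrite gt_eqF.
by rewrite lerD2l.
Qed.

Lemma nneseries_powRN_lty (s : R) : 1 < s ->
  (\sum_(1 <= n <oo) (n%:R `^ (- s))%:E < +oo)%E.
Proof.
move=> s1; apply: (@le_lt_trans _ _ (s / (s - 1))%:E); last exact: ltry.
apply: lime_le; first by apply: is_cvg_nneseries => n _ _; exact: powR_ge0.
by apply: nearW => n; rewrite sumEFin lee_fin powRN_partial_sum_le.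
Qed.

End powR_series.

Section double_series.
Context {R : realType}.
Local Open Scope ereal_scope.

Lemma lee_nneseries_from (u v : (\bar R)^nat) N :
  (forall i, (N <= i)%N -> 0 <= u i) -> (forall i, (N <= i)%N -> u i <= v i) ->
  \sum_(N <= i <oo) u i <= \sum_(N <= i <oo) v i.
Proof.
move=> u0 uv; rewrite (eseries_cond u) (eseries_cond v).
by apply: lee_nneseries => [i _ /= /u0|i /= /uv].
Qed.

Lemma nneseries_mul_lty (u v : R^nat) N :
  (forall n, (0 <= u n)%R) -> (forall n, (0 <= v n)%R) ->
  \sum_(N <= m <oo) (u m)%:E < +oo -> \sum_(N <= j <oo) (v j)%:E < +oo ->
  \sum_(N <= m <oo) \sum_(N <= j <oo) (u m * v j)%:E < +oo.
Proof.
move=> u0 v0 u_lty v_lty.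
have [z vE] : exists z, \sum_(N <= j <oo) (v j)%:E = z%:E.
  exists (fine (\sum_(N <= j <oo) (v j)%:E)); rewrite fineK // ge0_fin_numE //.
  by apply: nneseries_ge0 => j _ _; rewrite lee_fin.
have inner m : \sum_(N <= j <oo) (u m * v j)%:E = z%:E * (u m)%:E.
  rewrite (eq_eseriesr (g := fun j => (u m)%:E * (v j)%:E)) => [|j _];
    last exact: EFinM.
  by rewrite nneseriesZl => [|j _]; [rewrite vE muleC | rewrite lee_fin].
rewrite (eq_eseriesr (g := fun m => z%:E * (u m)%:E)) => [|m _]; last exact: inner.
rewrite nneseriesZl => [|m _]; last by rewrite lee_fin.
by rewrite lte_mul_pinfty // -vE; apply: nneseries_ge0 => j _ _; rewrite lee_fin.
Qed.

End double_series.

Lemma N_function_ge0 {R : realType} (phi : R -> R) : N_function phi ->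
  forall x, 0 <= phi x.
Proof.
case=> _ [phiN [phi_convex [phi0 _]]] x.
have h0 : 0 <= 1 / 2 :> R by lra.
have h1 : 1 / 2 <= 1 :> R by lra.
have := phi_convex x (- x) _ h0 h1.
have -> : 1 / 2 * x + (1 - 1 / 2) * - x = 0 :> R by field.
rewrite phiN phi0; lra.
Qed.

Lemma young_fenchel_approx {R : realType} (phi : R -> R) (v r : R) :
  (forall x, 0 <= phi x) -> 0 <= v -> 0 <= r -> r < young_fenchel phi v ->
  exists2 y, 0 < y & r < v * y - phi y.
Proof.
move=> phi_ge0 v0 r0 /sup_gt[|_ [y _ <-] ry].
  by exists (v * 0 - phi 0), 0.
exists y => //; rewrite ltNge; apply/negP => y_le0.
have : v * y <= 0 by rewrite mulr_ge0_le0.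
have := phi_ge0 y; lra.
Qed.

Section mfun_level_sets.
Context {d : measure_display} {T : measurableType d} {R : realType}.
Variable f : {mfun T >-> R}.

Lemma measurable_mfun_gt (c : R) : measurable [set x | c < f x].
Proof. by rewrite -preimage_itvoy; exact: measurable_funPTI. Qed.

Lemma measurable_mfun_ge (c : R) : measurable [set x | c <= f x].
Proof. by rewrite -preimage_itvcy; exact: measurable_funPTI. Qed.

End mfun_level_sets.

Definition subgaussian_scale {R : realType} {d : measure_display}
    {T : measurableType d} (P : probability T R) (phi : R -> R)
    (X : {RV P >-> R}) (a : R) : Prop :=
  0 < a /\ forall t : R,
    (\int[P]_x (expR (t * X x))%:E <= (expR (phi (a * t)))%:E)%E.

Section subgaussian_tail.
Context {R : realType} {d : measure_display} {T : measurableType d}.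
Context {P : probability T R} {phi : R -> R} {X : {RV P >-> R}}.
Local Notation subgaussian_scale := (subgaussian_scale P phi X).

Lemma tau_phiE : tau_phi P phi X = inf [set a | subgaussian_scale a].
Proof. by []. Qed.

Lemma tau_phi_ge0 : 0 <= tau_phi P phi X.
Proof.
rewrite tau_phiE; have [->|/set0P ne] := eqVneq [set a | subgaussian_scale a] set0.
  by rewrite inf0.
by apply: lb_le_inf => // a [/ltW].
Qed.

Lemma tau_phi_inv_approx (eps : R) : phi_subgaussian P phi X ->
  0 < tau_phi P phi X -> 0 < eps ->
  exists2 a, subgaussian_scale a & (tau_phi P phi X)^-1 - eps < a^-1.
Proof.
move=> [_ [a0 Sa0]] tau_gt0 eps_gt0; set tau := tau_phi P phi X in tau_gt0 *.
have S0 : [set a | subgaussian_scale a] !=set0 by exists a0.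
have : inf [set a | subgaussian_scale a] < tau + eps * tau ^+ 2.
  by rewrite -tau_phiE ltrDl mulr_gt0 // exprn_gt0.
move=> /(inf_lt S0)[a Sa a_lt]; exists a => //.
have tau_le_a : tau <= a.
  by rewrite /tau tau_phiE; apply: ge_inf => //; exists 0 => b [/ltW].
have a_gt0 : 0 < a by case: Sa.
rewrite ltrBlDr -ltrBlDl.
have -> : tau^-1 - a^-1 = (a - tau) / (tau * a) by field; rewrite !gt_eqF.
by rewrite ltr_pdivrMr ?mulr_gt0 //; nra.
Qed.

Lemma subgaussian_chernoff (c : R) {a y : R} : subgaussian_scale a -> 0 < y ->
  (P [set x | (c <= X x)%R] <= (expR (phi y - y * c / a))%:E)%E.
Proof.
move=> [a_gt0 mgf_le] y_gt0.
have r_gt0 : 0 < y / a by rewrite divr_gt0.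
apply: (le_trans (chernoff X c r_gt0)).
have mgfE : ('M_P X (y / a) = \int[P]_x (expR (y / a * X x))%:E)%E.
  by rewrite /mmt_gen_fun unlock; congr integral; apply: funext => x /=; rewrite mulrC.
rewrite mgfE; apply: (le_trans (lee_wpmul2r _ (mgf_le (y / a)))).
  by rewrite lee_fin expR_ge0.
rewrite -EFinM -expRD lee_fin ler_expR mulrCA divff ?gt_eqF // mulr1.
by rewrite mulrAC.
Qed.

Lemma tau_phi_gt0 (G F : R) : 1 <= F -> F <= G / tau_phi P phi X ->
  0 < tau_phi P phi X.
Proof.
move=> F_ge1 F_le; rewrite lt_def tau_phi_ge0 andbT.
by apply: contraTneq F_le => ->; rewrite invr0 mulr0 -ltNge; lra.
Qed.

Lemma subgaussian_tail_le (G v F : R) :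
  (forall x, 0 <= phi x) -> phi_subgaussian P phi X ->
  0 <= v -> 0 <= young_fenchel phi v -> 1 <= F -> F <= G / tau_phi P phi X ->
  (P [set x | (G * v <= X x)%R] <= (expR (1 - F * young_fenchel phi v))%:E)%E.
Proof.
move=> phi_ge0 X_subg v_ge0 L_ge0 F_ge1 F_le.
have tau_gt0 := tau_phi_gt0 _ _ F_ge1 F_le.
set L := young_fenchel phi v in L_ge0 *; set tau := tau_phi P phi X in F_le tau_gt0.
have G_gt0 : 0 < G.
  have : 0 < G / tau by lra.
  by rewrite pmulr_lgt0 // invr_gt0.
have [L0|L_neq0] := eqVneq L 0.
  rewrite L0 mulr0 subr0; apply: le_trans (probability_le1 _ _) _.
    exact: measurable_mfun_ge.
  by rewrite lee_fin ltW // expR_gt1.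
have {L_ge0 L_neq0} L_gt0 : 0 < L by rewrite lt_def L_neq0.
(* Neither the supremum defining L nor the infimum defining tau need be
   attained; each of the two approximations below costs at most 1/2 in the
   exponent, which is where the factor e comes from. *)
pose eps := Num.min L F^-1 / 2.
have min_gt0 : 0 < Num.min L F^-1 by rewrite lt_min L_gt0 invr_gt0; lra.
have min_le_L : Num.min L F^-1 <= L by rewrite ge_min lexx.
have F_eps : F * eps <= 1 / 2.
  have : F * Num.min L F^-1 <= F * F^-1.
    by rewrite ler_pM2l ?ge_min ?lexx ?orbT //; lra.
  by rewrite divff ?gt_eqF /eps; lra.
have [y y_gt0 y_near] : exists2 y, 0 < y & L - eps < v * y - phi y.
  by apply: young_fenchel_approx => //; rewrite -/L /eps; lra.
pose K := G * v * y.
have K_ge0 : 0 <= K by rewrite !mulr_ge0 // ltW.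
have eps'_gt0 : 0 < (2 * (K + 1))^-1 by rewrite invr_gt0; lra.
have [a Sa a_inv] := tau_phi_inv_approx _ X_subg tau_gt0 eps'_gt0.
apply: le_trans (subgaussian_chernoff (G * v) Sa y_gt0) _.
rewrite lee_fin ler_expR.
have K_a : K * (tau^-1 - (2 * (K + 1))^-1) <= K * a^-1 by rewrite ler_wpM2l // ltW.
have K_eps' : K * (2 * (K + 1))^-1 <= 1 / 2.
  by rewrite mulrC ler_pdivrMl ?mulr_gt0 //; lra.
have K_tau : F * (v * y) <= K * tau^-1.
  have -> : K * tau^-1 = G / tau * (v * y) by rewrite /K; ring.
  by rewrite ler_wpM2r ?mulr_ge0 // ltW.
have F_y : F * (L - eps) <= F * (v * y - phi y) by rewrite ler_wpM2l //; lra.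
have F_phi : phi y <= F * phi y by rewrite ler_peMl.
have -> : y * (G * v) / a = K * a^-1 by rewrite /K; ring.
lra.
Qed.

End subgaussian_tail.

Section max_array.
Context {R : realType} {T : Type}.

Lemma max_array_gtE (X : nat -> nat -> T -> R) m j c : (0 < m)%N -> (0 < j)%N ->
  [set x | c < max_array X m j x] =
  \big[setU/set0]_(k < m) \big[setU/set0]_(n < j) [set x | c < X k.+1 n.+1 x].
Proof.
move=> m_gt0 j_gt0.
rewrite -(bigcup_mkord m
  (fun k => \big[setU/set0]_(n < j) [set x | c < X k.+1 n.+1 x])).
under eq_bigcupr => k _ do
  rewrite -(bigcup_mkord j (fun n => [set x | c < X k.+1 n.+1 x])).
apply/seteqP; split => x /=; last first.
  move=> [k /= km [n /= nj /lt_le_trans]]; apply.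
  apply: le_trans (le_bigmax _ _ (Ordinal km)) => /=.
  exact: (le_bigmax _ _ (Ordinal nj)).
rewrite ltNge => /negP max_gt; apply: contrapT => none; apply: max_gt.
have X_le k n : (k < m)%N -> (n < j)%N -> X k.+1 n.+1 x <= c.
  move=> km nj; rewrite leNgt; apply/negP => X_gt.
  by apply: none; exists k => //; exists n.
apply/bigmax_leP; split=> [|k _]; first exact: X_le.
by apply/bigmax_leP; split=> [|n _]; exact: X_le.
Qed.

End max_array.

Lemma measure_max_array_gt {d} {T : measurableType d} {R : realType}
    (mu : {measure set T -> \bar R}) (X : nat -> nat -> {mfun T >-> R})
    m j (c : R) :
    (0 < m)%N -> (0 < j)%N ->
  (mu [set x | (c < max_array (fun k n => X k n) m j x)%R] <=
   \sum_(k < m) \sum_(n < j) mu [set x | (c < X k.+1 n.+1 x)%R])%E.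
Proof.
move=> m_gt0 j_gt0; rewrite max_array_gtE //.
apply: le_trans (@Boole_inequality _ _ _ mu
  (fun k => \big[setU/set0]_(n < j) [set x | c < X k.+1 n.+1 x]) m _) _.
  by move=> k _; apply: bigsetU_measurable => n _; exact: measurable_mfun_gt.
apply: lee_sum => k _.
apply: (@Boole_inequality _ _ _ mu (fun n => [set x | c < X k.+1 n.+1 x])) => n _.
exact: measurable_mfun_gt.
Qed.

Section corollary3_summand.
Context {R : realType} {d : measure_display} {T : measurableType d}.
Context {P : probability T R} {phi psi_inv g f : R -> R}.
Context {X : nat -> nat -> {RV P >-> R}} {c0 : R}.
Hypothesis phi_ge0 : forall x, 0 <= phi x.
Hypothesis psi_invP : forall u, 0 <= u ->
  0 <= psi_inv u /\ young_fenchel phi (psi_inv u) = u.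
Hypothesis X_subgaussian : forall k n, (1 <= k)%N -> (1 <= n)%N ->
  phi_subgaussian P phi (X k n).
Hypothesis f_between : forall m j k n, (1 <= k <= m)%N -> (1 <= n <= j)%N ->
  g (ln (m * j)%:R) / tau_phi P phi (X k n) >= f ((m * j)%:R / (k * n)%:R) /\
  f ((m * j)%:R / (k * n)%:R) >= 1.
Hypothesis f_ge_c0 : forall x, 1 <= x -> f x >= c0.

Local Notation a m j := (g (ln (m * j)%:R) * psi_inv (ln (m * j)%:R)).

Lemma array_entry_tail_le m j k n : (1 <= k <= m)%N -> (1 <= n <= j)%N ->
  (P [set x | (a m j <= X k n x)%R] <=
   (expR (1 - c0 * ln (m * j)%:R))%:E)%E.
Proof.
move=> kmP njP; have /andP[k_ge1 km] := kmP; have /andP[n_ge1 nj] := njP.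
set L := ln (m * j)%:R.
have mj_ge1 : 1 <= (m * j)%:R :> R.
  by rewrite ler1n muln_gt0 (leq_trans k_ge1 km) (leq_trans n_ge1 nj).
have [v_ge0 psiE] := psi_invP L (ln_ge0 mj_ge1).
have [F_le F_ge1] := f_between m j k n kmP njP.
have X_subg := X_subgaussian k n k_ge1 n_ge1.
apply: le_trans (subgaussian_tail_le (g L) _ _ phi_ge0 X_subg v_ge0 _ F_ge1 F_le) _.
  by rewrite psiE ln_ge0.
rewrite psiE lee_fin ler_expR lerD2l lerN2 ler_wpM2r ?ln_ge0 // f_ge_c0 //.
by rewrite ler_pdivlMr ?mul1r ?ler_nat ?leq_mul // ltr0n muln_gt0 k_ge1.
Qed.

Lemma max_array_tail_le m j : (0 < m)%N -> (0 < j)%N ->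
  (P [set x | (a m j < max_array (fun k n => X k n) m j x)%R] <=
   ((m * j)%:R * expR (1 - c0 * ln (m * j)%:R))%:E)%E.
Proof.
move=> m_gt0 j_gt0; apply: le_trans (measure_max_array_gt P X _ _ _ m_gt0 j_gt0) _.
apply: (@le_trans _ _
  (\sum_(k < m) \sum_(n < j) (expR (1 - c0 * ln (m * j)%:R))%:E)).
  apply: lee_sum => k _; apply: lee_sum => n _.
  apply: le_trans _ (array_entry_tail_le m j k.+1 n.+1 (ltn_ord k) (ltn_ord n)).
  apply: le_measure; rewrite ?inE; last by move=> x /= /ltW.
    exact: measurable_mfun_gt.
  exact: measurable_mfun_ge.
under eq_bigr do rewrite sumEFin.
by rewrite sumEFin lee_fin !sumr_const !card_ord -mulrnA mulr_natl mulnC.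
Qed.

Lemma max_array_summand_le alpha m j : (0 < m)%N -> (0 < j)%N ->
  (((m * j)%:R `^ (- alpha))%:E *
     P [set x | (0 < Num.max (max_array (fun k n => X k n) m j x - a m j) 0)%R] <=
   (expR 1 * m%:R `^ (- (alpha + c0 - 1)) * j%:R `^ (- (alpha + c0 - 1)))%:E)%E.
Proof.
move=> m_gt0 j_gt0.
under eq_set => x do rewrite lt_max ltxx orbF subr_gt0.
have w_ge0 : (0 <= ((m * j)%:R `^ (- alpha))%:E)%E by rewrite lee_fin powR_ge0.
apply: le_trans (lee_wpmul2l w_ge0 (max_array_tail_le m j m_gt0 j_gt0)) _.
rewrite -EFinM lee_fin -mulrA -powRM ?ler0n // -natrM.
have M_gt0 : 0 < (m * j)%:R :> R by rewrite ltr0n muln_gt0 m_gt0.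
set M := (m * j)%:R in M_gt0 *.
have powRE r : M `^ r = expR (r * ln M) by rewrite /powR gt_eqF.
rewrite !powRE -{2}[M]lnK ?posrE // -!expRD ler_expR; lra.
Qed.

End corollary3_summand.

Theorem corollary3 (R : realType) (d : measure_display) (T : measurableType d)
  (P : probability T R) (phi : R -> R) (psi_inv : R -> R)
  (X : nat -> nat -> {RV P >-> R}) (g f : R -> R) (c0 alpha : R) :
  N_function phi ->
  (forall u, 0 <= u -> 0 <= psi_inv u /\ young_fenchel phi (psi_inv u) = u) ->
  (forall k n, (1 <= k)%N -> (1 <= n)%N -> phi_subgaussian P phi (X k n)) ->
  (forall x, 0 < g x) ->
  (forall x y, x <= y -> g x <= g y) ->
  (forall x, 0 < f x) ->
  (forall m j k n, (1 <= k <= m)%N -> (1 <= n <= j)%N ->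
     g (ln (m * j)%:R) / tau_phi P phi (X k n) >= f ((m * j)%:R / (k * n)%:R) /\
     f ((m * j)%:R / (k * n)%:R) >= 1) ->
  0 < c0 ->
  (forall x, 1 <= x -> f x >= c0) ->
  2 - c0 < alpha ->
  let a := fun m j : nat => g (ln (m * j)%:R) * psi_inv (ln (m * j)%:R) in
  let Y := fun (m j : nat) (x : T) =>
             max_array (fun k n => (X k n : T -> R)) m j x - a m j in
  ((\sum_(1 <= m <oo) \sum_(1 <= j <oo)
      (((m * j)%:R `^ (- alpha))%:E * P [set x | (0 < Num.max (Y m j x) 0)%R]))
   < +oo)%E.
Proof.
move=> /N_function_ge0 phi_ge0 psi_invP X_subgaussian _ _ _ f_between _ f_ge_c0
  alpha_gt; cbv zeta.
set s := alpha + c0 - 1; have s_gt1 : 1 < s by rewrite /s; lra.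
have powRN_lty := nneseries_powRN_lty s s_gt1.
have e_powRN_lty : (\sum_(1 <= m <oo) (expR 1 * m%:R `^ (- s))%:E < +oo)%E.
  under eq_eseriesr do rewrite EFinM.
  by rewrite nneseriesZl ?lte_mul_pinfty // => m _; rewrite lee_fin powR_ge0.
apply: le_lt_trans (nneseries_mul_lty _ _ _ _ _ e_powRN_lty powRN_lty);
  last 2 first.
- by move=> m; rewrite mulr_ge0 ?expR_ge0 ?powR_ge0.
- by move=> j; exact: powR_ge0.
apply: lee_nneseries_from => [m _|m m_ge1].
  by apply: nneseries_ge0 => j _ _; rewrite mule_ge0 ?lee_fin ?powR_ge0.
apply: lee_nneseries_from => [j _|j j_ge1].
  by rewrite mule_ge0 ?lee_fin ?powR_ge0.
exact: max_array_summand_le phi_ge0 psi_invP X_subgaussian f_between f_ge_c0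
  alpha m j m_ge1 j_ge1.
Qed.
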